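(* Let $x,y \in \mathcal{G}$. We have that \begin{align*} \eta_x^2 = \eta_x\sigma(x,x^{-1}), & \text{ } n_x^2 = n_x, \\ \eta_x = 0 \iff \sigma(x,x^{-1}) = 0 \iff & \Gamma(x) = 0 \iff n_x = 0, \\ r(x) = r(y) \implies (\eta_x\eta_y = 0 & \iff \eta_y\eta_x = 0 \iff n_xn_y = 0), \\ d(x) = r(y) \implies \Gamma(x)n_y & = n_{xy}\Gamma(x), \\ r(x) = r(y) \implies n_xn_y & = n_yn_x. \end{align*}
   Context: Let $\mathbb{K}$ be a field and $\mathbb{K}^*$ its multiplicative group. Let $\mathcal{G}$ be a groupoid (a set with a partially defined associative product in which each $g$ has domain $d(g)=g^{-1}g$, range $r(g)=gg^{-1}$ and inverse $g^{-1}$; $\exists gh$ iff $d(g)=r(h)$). A $\mathbb{K}$-semigroup is a semigroup $S$ with $0$ together with a map $\mathbb{K}\times S\to S$ such that $\alpha(\beta x)=(\alpha\beta)x$, $1_\mathbb{K}x=x$, $\alpha(xy)=(\alpha x)y=x(\alpha y)$ and $0_\mathbb{K}x = x0_\mathbb{K}=0_S$; it is $\mathbb{K}$-cancellative if moreover $\alpha x=\beta x$ with $0\neq x$ implies $\alpha=\beta$. Let $S$ be a $\mathbb{K}$-cancellative semigroup and $\Gamma:\mathcal{G}\to S$ a partial projective representation of $\mathcal{G}$, i.e. the composition of $\Gamma$ with the projection $S\to S/\lambda$ (where $x\lambda y$ iff $x=\alpha y$ for some $\alpha\in\mathbb{K}^*$) is a partial homomorphism: if $\exists xy$ then $\exists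 \varphi(x)\varphi(y)$ and $\varphi(x^{-1})\varphi(x)\varphi(y)=\varphi(x^{-1})\varphi(xy)$, $\varphi(x)\varphi(y)\varphi(y^{-1})=\varphi(xy)\varphi(y^{-1})$. Let $\sigma:\mathcal{G}\times\mathcal{G}\to\mathbb{K}$ be the factor set associated with $\Gamma$: on $\{(x,y)\in\mathcal{G}^2 : \Gamma(x)\Gamma(y)\neq 0\}$ it is the unique $\mathbb{K}^*$-valued map with $\Gamma(x^{-1})\Gamma(x)\Gamma(y) = \Gamma(x^{-1})\Gamma(xy)\sigma(x,y)$ and $\Gamma(x)\Gamma(y)\Gamma(y^{-1}) = \Gamma(xy)\Gamma(y^{-1})\sigma(x,y)$, and it is set equal to $0$ elsewhere. Assume that $\Gamma(r(x))$ and $\Gamma(d(x))$ are left and right identities to $\Gamma(x)$, respectively, for all $x\in\mathcal{G}$. Then $\sigma(x,x^{-1}) = \sigma(x^{-1},x)$ for all $x$. Write $\eta_x = \Gamma(x)\Gamma(x^{-1})$ and define $n_x = \eta_x\sigma(x^{-1},x)^{-1}$ if $\Gamma(x)\neq 0$, and $n_x=0$ if $\Gamma(x)=0$. *)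

From mathcomp Require Import all_boot all_algebra.
From Stdlib Require Import ClassicalEpsilon.
Set Implicit Arguments. Unset Strict Implicit. Unset Printing Implicit Defensive.
Import GRing.Theory.
Local Open Scope ring_scope.

(* A groupoid: a set with a partial product, defined exactly when d(g) = r(h),
   where d(g) = g^-1 g and r(g) = g g^-1.  The product is modelled by a total
   function [gmul] whose values on non-composable pairs are irrelevant. *)
Record groupoid := Groupoid {
  gcar :> Type;
  gmul : gcar -> gcar -> gcar;
  ginv : gcar -> gcar;
  ginvK : forall x, ginv (ginv x) = x;
  gassoc : forall x y z,
    gmul (ginv x) x = gmul y (ginv y) -> gmul (ginv y) y = gmul z (ginv z) ->
    gmul (gmul x y) z = gmul x (gmul y z);
  gd_mul : forall x y, gmul (ginv x) x = gmul y (ginv y) ->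
    gmul (ginv (gmul x y)) (gmul x y) = gmul (ginv y) y;
  gr_mul : forall x y, gmul (ginv x) x = gmul y (ginv y) ->
    gmul (gmul x y) (ginv (gmul x y)) = gmul x (ginv x);
  gmulKl : forall x y, gmul (ginv x) x = gmul y (ginv y) ->
    gmul (ginv x) (gmul x y) = y;
  gmulKr : forall x y, gmul (ginv x) x = gmul y (ginv y) ->
    gmul (gmul x y) (ginv y) = x
}.

Definition gd (G : groupoid) (x : G) : G := gmul (ginv x) x.
Definition gr (G : groupoid) (x : G) : G := gmul x (ginv x).

Record ksemigroup (K : fieldType) := KSemigroup {
  scar :> Type;
  smul : scar -> scar -> scar;
  szero : scar;
  sact : K -> scar -> scar;
  smulA : forall x y z, smul (smul x y) z = smul x (smul y z);
  smul0l : forall x, smul szero x = szero;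
  smul0r : forall x, smul x szero = szero;
  sactA : forall (a b : K) x, sact a (sact b x) = sact (a * b) x;
  sact1 : forall x, sact 1 x = x;
  sactMl : forall (a : K) x y, sact a (smul x y) = smul (sact a x) y;
  sactMr : forall (a : K) x y, sact a (smul x y) = smul x (sact a y);
  sact0 : forall x, sact 0 x = szero
}.

Definition kcancellative (K : fieldType) (S : ksemigroup K) : Prop :=
  forall (a b : K) (x : S), x <> szero S -> sact a x = sact b x -> a = b.

Definition lam (K : fieldType) (S : ksemigroup K) (x y : S) : Prop :=
  exists a : K, a != 0 /\ x = sact a y.

(* Gamma composed with S -> S/lambda is a partial homomorphism (equalities in
   S/lambda written out as the lambda relation on representatives). *)
Definition partial_proj_rep (K : fieldType) (G : groupoid) (S : ksemigroup K)
  (Gam : G -> S) : Prop :=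
  forall x y : G, gd x = gr y ->
    lam (smul (smul (Gam (ginv x)) (Gam x)) (Gam y))
        (smul (Gam (ginv x)) (Gam (gmul x y))) /\
    lam (smul (smul (Gam x) (Gam y)) (Gam (ginv y)))
        (smul (Gam (gmul x y)) (Gam (ginv y))).

Definition factor_set (K : fieldType) (G : groupoid) (S : ksemigroup K)
  (Gam : G -> S) (sigma : G -> G -> K) : Prop :=
  forall x y : G,
    ((gd x = gr y /\ smul (Gam x) (Gam y) <> szero S) ->
      sigma x y != 0 /\
      smul (smul (Gam (ginv x)) (Gam x)) (Gam y)
        = sact (sigma x y) (smul (Gam (ginv x)) (Gam (gmul x y))) /\
      smul (smul (Gam x) (Gam y)) (Gam (ginv y))
        = sact (sigma x y) (smul (Gam (gmul x y)) (Gam (ginv y)))) /\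
    (~ (gd x = gr y /\ smul (Gam x) (Gam y) <> szero S) -> sigma x y = 0).

Definition eta (K : fieldType) (G : groupoid) (S : ksemigroup K)
  (Gam : G -> S) (x : G) : S := smul (Gam x) (Gam (ginv x)).

Definition nelt (K : fieldType) (G : groupoid) (S : ksemigroup K)
  (Gam : G -> S) (sigma : G -> G -> K) (x : G) : S :=
  if excluded_middle_informative (Gam x = szero S) then szero S
  else sact (sigma (ginv x) x)^-1 (eta Gam x).

From mathcomp Require Import all_boot all_algebra.
From Stdlib Require Import Classical ClassicalEpsilon.
Set Implicit Arguments. Unset Strict Implicit. Unset Printing Implicit Defensive.
Import GRing.Theory.
Local Open Scope ring_scope.

(* Work modulo the relation lam of nonzero scalar multiples, a congruence of S
   that preserves zero.  There the partial homomorphism identities let one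
   regroup products of Gamma's freely; this yields eta_x eta_y ~ eta_y eta_x
   when r(x) = r(y), and eta_(xy) Gamma(x) ~ Gamma(x) eta_y when d(x) = r(y).
   Dividing eta_x by sigma(x, x^-1) = sigma(x^-1, x) (K-cancellativity) makes
   n_x idempotent, and a lam-relation between products that absorb these
   idempotents on the appropriate sides is an equality. *)

Local Notation "a ** b" := (smul a b) (at level 40, left associativity).

Section LambdaRelation.

Variables (K : fieldType) (S : ksemigroup K).
Implicit Types (a : K) (p q r e f : S).

Lemma sact_szero a : sact a (szero S) = szero S.
Proof. by rewrite -[X in sact a X](smul0l (szero S)) sactMr smul0l. Qed.

Lemma lam_refl p : lam p p.
Proof. by exists 1; rewrite oner_neq0 sact1. Qed.

Lemma lam_sym p q : lam p q -> lam q p.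
Proof.
move=> [a [a0 ->]]; exists a^-1.
by rewrite invr_eq0 a0 sactA mulVf // sact1.
Qed.

Lemma lam_trans p q r : lam p q -> lam q r -> lam p r.
Proof.
move=> [a [a0 ->]] [b [b0 ->]]; exists (a * b).
by rewrite mulf_neq0 // sactA.
Qed.

Lemma lam_mull r p q : lam p q -> lam (r ** p) (r ** q).
Proof. by move=> [a [a0 ->]]; exists a; rewrite sactMr. Qed.

Lemma lam_mulr r p q : lam p q -> lam (p ** r) (q ** r).
Proof. by move=> [a [a0 ->]]; exists a; rewrite sactMl. Qed.

Lemma lam_mul p q p' q' : lam p q -> lam p' q' -> lam (p ** p') (q ** q').
Proof. by move=> Hp Hp'; apply: lam_trans (lam_mulr _ Hp) (lam_mull _ Hp'). Qed.

Lemma lam_szero p q : lam p q -> (p = szero S <-> q = szero S).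
Proof.
move=> Hpq; split=> [p0 | q0].
  by have [a [_ ->]] := lam_sym Hpq; rewrite p0 sact_szero.
by have [a [_ ->]] := Hpq; rewrite q0 sact_szero.
Qed.

Lemma lam_absorb_eq e f p q :
  lam p q -> e ** p = p -> q ** f = q -> e ** q = p ** f -> p = q.
Proof.
move=> Hpq epp qfq eqpf.
have [a [_ pE]] := Hpq; have [b [_ qE]] := lam_sym Hpq.
have pfp : p ** f = p by rewrite {1}pE -sactMl qfq -pE.
have eqq : e ** q = q by rewrite {1}qE -sactMr epp -qE.
by rewrite -pfp -eqpf eqq.
Qed.

End LambdaRelation.

Section GroupoidFacts.

Variable G : groupoid.
Implicit Types x y : G.

Lemma gd_ginv x : gd (ginv x) = gr x.
Proof. by rewrite /gd /gr ginvK. Qed.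

Lemma gr_ginv x : gr (ginv x) = gd x.
Proof. by rewrite /gd /gr ginvK. Qed.

Lemma ginvM x y : gd x = gr y -> ginv (gmul x y) = gmul (ginv y) (ginv x).
Proof.
move=> xy; set w := gmul x y.
have wx : gmul (gmul (ginv w) x) (ginv x) = ginv w.
  by apply: gmulKr; rewrite ginvK; apply: gr_mul.
have wy : gmul (ginv w) x = ginv y.
  by rewrite -{1}(gmulKr xy) gmulKl // ginvK; apply: gd_mul.
by rewrite -wx wy.
Qed.

End GroupoidFacts.
Section ProjectiveRepresentation.

Variables (K : fieldType) (G : groupoid) (S : ksemigroup K).
Variables (Gam : G -> S) (sigma : G -> G -> K).
Hypothesis S_canc : kcancellative S.
Hypothesis Gam_rep : partial_proj_rep Gam.
Hypothesis sigma_factor : factor_set Gam sigma.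
Hypothesis Gam_unit : forall x : G,
  Gam (gr x) ** Gam x = Gam x /\ Gam x ** Gam (gd x) = Gam x.
Implicit Types x y u : G.

Local Notation n := (nelt Gam sigma).

Lemma Gam_lam_triple x : lam (Gam x ** Gam (ginv x) ** Gam x) (Gam x).
Proof.
have [_] := Gam_rep (esym (gr_ginv x)).
by rewrite ginvK -/(gr x) (Gam_unit x).1.
Qed.

Lemma eta_eq0 x : eta Gam x = szero S <-> Gam x = szero S.
Proof.
split=> [eta0 | Gam0]; last by rewrite /eta Gam0 smul0l.
by apply/(lam_szero (Gam_lam_triple x)); rewrite -/(eta Gam x) eta0 smul0l.
Qed.

Lemma sigma_inv_eq0 x : sigma x (ginv x) = 0 <-> eta Gam x = szero S.
Proof.
have [fs_def fs_undef] := sigma_factor x (ginv x).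
split=> [sigma0 | eta0]; last by apply: fs_undef => -[].
apply: NNPP => eta_neq0.
by have [] := fs_def (conj (esym (gr_ginv x)) eta_neq0); rewrite sigma0 eqxx.
Qed.

Lemma eta_mulGam x : eta Gam x ** Gam x = sact (sigma x (ginv x)) (Gam x).
Proof.
have [Gam0 | Gam_neq0] := classic (Gam x = szero S).
  by rewrite Gam0 smul0r sact_szero.
have eta_neq0 : eta Gam x <> szero S by rewrite eta_eq0.
have [_ [_]] := (sigma_factor x (ginv x)).1 (conj (esym (gr_ginv x)) eta_neq0).
by rewrite ginvK -/(gr x) (Gam_unit x).1.
Qed.

(* Both sides are the scalar relating Gamma(x) Gamma(x^-1) Gamma(x) to Gamma(x). *)
Lemma sigma_invC x : sigma x (ginv x) = sigma (ginv x) x.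
Proof.
have [fs_def fs_undef] := sigma_factor (ginv x) x.
have [Gam0 | Gam_neq0] := classic (Gam x = szero S).
  rewrite (proj2 (sigma_inv_eq0 x)) ?eta_eq0 //; symmetry.
  by apply: fs_undef => -[_]; rewrite Gam0 smul0r.
have GG_neq0 : Gam (ginv x) ** Gam x <> szero S.
  move=> GG0; apply/Gam_neq0/(lam_szero (Gam_lam_triple x)).
  by rewrite smulA GG0 smul0r.
have [_ [+ _]] := fs_def (conj (gd_ginv x) GG_neq0).
rewrite ginvK -[gmul (ginv x) x]/(gd x) (Gam_unit x).2 -/(eta Gam x).
by rewrite eta_mulGam; apply: S_canc.
Qed.

Lemma eta_idem x : eta Gam x ** eta Gam x = sact (sigma x (ginv x)) (eta Gam x).
Proof. by rewrite {2}/eta -smulA eta_mulGam -sactMl. Qed.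

Lemma nelt_lam x : lam (n x) (eta Gam x).
Proof.
rewrite /nelt; case: excluded_middle_informative => [Gam0 | Gam_neq0].
  by rewrite (proj2 (eta_eq0 x) Gam0); apply: lam_refl.
exists (sigma (ginv x) x)^-1; rewrite invr_eq0 -sigma_invC; split=> //.
by apply/eqP => /sigma_inv_eq0/eta_eq0.
Qed.

Lemma nelt_eq0 x : n x = szero S <-> Gam x = szero S.
Proof. by rewrite -eta_eq0; apply: lam_szero (nelt_lam x). Qed.

Lemma nelt_idem x : n x ** n x = n x.
Proof.
rewrite /nelt; case: excluded_middle_informative => [Gam0 | Gam_neq0].
  by rewrite smul0l.
have sigma_neq0 : sigma (ginv x) x != 0.
  by rewrite -sigma_invC; apply/eqP => /sigma_inv_eq0/eta_eq0.
by rewrite /= -sactMl -sactMr eta_idem sigma_invC !sactA -mulrA mulVf ?mulr1.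
Qed.

Lemma eta_mul_lam x y : gr x = gr y ->
  lam (eta Gam x ** eta Gam y) (Gam x ** Gam (gmul (ginv x) y) ** Gam (ginv y)).
Proof.
rewrite -gd_ginv => xy; have [_ L] := Gam_rep xy.
by have := lam_mull (Gam x) L; rewrite /eta !smulA.
Qed.

Lemma Gam_lam_rev x u : gd x = gr u ->
  lam (Gam (gmul x u) ** Gam (ginv u) ** Gam (ginv x))
      (Gam x ** Gam u ** Gam (ginv (gmul x u))).
Proof.
move=> xu; set y := gmul x u.
have uy : gd u = gr (ginv y) by rewrite gr_ginv; symmetry; apply: gd_mul.
have uyx : gmul u (ginv y) = ginv x.
  by rewrite /y ginvM // -{1}(ginvK u) gmulKl // !ginvK; symmetry.
apply: lam_trans (_ : lam _ (Gam x ** Gam u ** Gam (ginv u) ** Gam (ginv x))) _.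
  by apply/lam_mulr/lam_sym; have [_] := Gam_rep xu.
apply: lam_trans (_ : lam _ (Gam x ** Gam u ** (Gam (ginv u) ** Gam u ** Gam (ginv y)))) _.
  by rewrite smulA; apply/lam_mull/lam_sym; have [+ _] := Gam_rep uy; rewrite uyx.
have := lam_mull (Gam x) (lam_mulr (Gam (ginv y)) (Gam_lam_triple u)).
by rewrite !smulA.
Qed.

Lemma eta_comm_lam x y : gr x = gr y ->
  lam (eta Gam x ** eta Gam y) (eta Gam y ** eta Gam x).
Proof.
move=> xy; have x'y : gd (ginv x) = gr y by rewrite gd_ginv.
set u := gmul (ginv x) y.
have xu : gd x = gr u by rewrite /u /gr (gr_mul x'y) -/(gr (ginv x)) gr_ginv.
have y_eq : gmul x u = y by have := gmulKl x'y; rewrite ginvK.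
have u_inv : ginv u = gmul (ginv y) x by rewrite /u ginvM // ginvK.
apply: lam_trans (eta_mul_lam xy) _; apply: lam_sym.
apply: lam_trans (eta_mul_lam (esym xy)) _.
by rewrite -/u -u_inv -y_eq; apply: Gam_lam_rev.
Qed.

Lemma nelt_comm x y : gr x = gr y -> n x ** n y = n y ** n x.
Proof.
move=> xy; apply: (@lam_absorb_eq _ _ (n x) (n x)).
- apply: lam_trans (lam_mul (nelt_lam x) (nelt_lam y)) _.
  apply: lam_trans (eta_comm_lam xy) _.
  exact/lam_sym/lam_mul/nelt_lam/nelt_lam.
- by rewrite -smulA nelt_idem.
- by rewrite smulA nelt_idem.
- by rewrite smulA.
Qed.

Lemma eta_mulGam_lam x y : gd x = gr y ->
  lam (eta Gam (gmul x y) ** Gam x) (Gam x ** eta Gam y).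
Proof.
move=> xy; set w := gmul x y.
have y'x' : gd (ginv y) = gr (ginv x) by rewrite gd_ginv gr_ginv.
have yx' : gr y = gr (ginv x) by rewrite gr_ginv.
rewrite /eta /w ginvM // -/w.
apply: lam_trans (_ : lam _ (Gam w ** Gam (ginv y) ** Gam (ginv x) ** Gam x)) _.
  have [_] := Gam_rep y'x'; rewrite ginvK => /lam_sym/(lam_mull (Gam w)).
  by rewrite !smulA.
apply: lam_trans (_ : lam _ (Gam x ** (eta Gam y ** eta Gam (ginv x)))) _.
  have [_ /lam_sym/(lam_mulr (Gam (ginv x) ** Gam x))] := Gam_rep xy.
  by rewrite /eta ginvK !smulA.
apply: lam_trans (lam_mull (Gam x) (eta_comm_lam yx')) _.
have := lam_mulr (Gam y ** Gam (ginv y)) (Gam_lam_triple x).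
by rewrite /eta ginvK !smulA.
Qed.

Lemma Gam_mul_nelt x y : gd x = gr y -> Gam x ** n y = n (gmul x y) ** Gam x.
Proof.
move=> xy; symmetry; apply: (@lam_absorb_eq _ _ (n (gmul x y)) (n y)).
- apply: lam_trans (lam_mulr _ (nelt_lam _)) _.
  apply: lam_trans (eta_mulGam_lam xy) _.
  exact/lam_mull/lam_sym/nelt_lam.
- by rewrite -smulA nelt_idem.
- by rewrite smulA nelt_idem.
- by rewrite smulA.
Qed.

End ProjectiveRepresentation.

Theorem mainTheorem17 (K : fieldType) (G : groupoid) (S : ksemigroup K)
  (Gam : G -> S) (sigma : G -> G -> K) :
  kcancellative S ->
  partial_proj_rep Gam ->
  factor_set Gam sigma ->
  (forall x : G, smul (Gam (gr x)) (Gam x) = Gam x /\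
                 smul (Gam x) (Gam (gd x)) = Gam x) ->
  forall x y : G,
    (* eta_x^2 = eta_x sigma(x,x^-1),  n_x^2 = n_x *)
    (smul (eta Gam x) (eta Gam x) = sact (sigma x (ginv x)) (eta Gam x) /\
     smul (nelt Gam sigma x) (nelt Gam sigma x) = nelt Gam sigma x) /\
    (* eta_x = 0 <-> sigma(x,x^-1) = 0 <-> Gamma(x) = 0 <-> n_x = 0 *)
    ((eta Gam x = szero S <-> sigma x (ginv x) = 0) /\
     (sigma x (ginv x) = 0 <-> Gam x = szero S) /\
     (Gam x = szero S <-> nelt Gam sigma x = szero S)) /\
    (gr x = gr y ->
       (smul (eta Gam x) (eta Gam y) = szero S <->
          smul (eta Gam y) (eta Gam x) = szero S) /\
       (smul (eta Gam y) (eta Gam x) = szero S <->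
          smul (nelt Gam sigma x) (nelt Gam sigma y) = szero S)) /\
    (gd x = gr y ->
       smul (Gam x) (nelt Gam sigma y) = smul (nelt Gam sigma (gmul x y)) (Gam x)) /\
    (gr x = gr y ->
       smul (nelt Gam sigma x) (nelt Gam sigma y)
         = smul (nelt Gam sigma y) (nelt Gam sigma x)).
Proof.
move=> canc rep fs unit x y.
have n_lam := nelt_lam canc rep fs unit.
have [sigma0 eta0] := (sigma_inv_eq0 fs x, eta_eq0 rep unit x).
split; first by split; [apply: eta_idem | apply: nelt_idem].
split; first by have := nelt_eq0 canc rep fs unit x; tauto.
split.
  move=> /(eta_comm_lam rep unit) eta_yx; split; first exact: lam_szero eta_yx.
  apply: iff_sym; apply: lam_szero.
  exact: lam_trans (lam_mul (n_lam x) (n_lam y)) eta_yx.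
split; [exact: Gam_mul_nelt | exact: nelt_comm].
Qed.
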